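(* Consider an instance of SPSC (defined in the context) and let $\{x_{ij}\},\{y_k\}$ be an optimal solution of the linear program (LP) defined in the context. Then the service placement $X^{\psi}$ output by algorithm SA2 (described in the context) has total reward at least $(1-e^{-1})R/4$, where $R$ is the maximum total reward of a feasible service placement.
   Context: An instance of the service placement with set constraints (SPSC) problem consists of finite sets $S$ (services), $V$ (nodes), $U$ (users); a size $s_i>0$ for each $i\in S$; a capacity $c_j>0$ for each $j\in V$; and for each user $k\in U$ a required service $i_k\in S$, a set $T_k\subseteq V$ and a reward $w_k>0$. A service placement is a family $X=\{X_i:i\in S\}$, $X_i\subseteq V$; it is feasible iff $\sum_{i}s_i\mathbf 1[j\in X_i]\le c_j$ for all $j$; its total reward is $\sum_kw_k\mathbf 1[T_k\cap X_{i_k}\ne\emptyset]$; $R$ is the maximum total reward over feasible placements. The LP has nonnegative real variables $x_{ij},y_k$: maximize $\sum_ky_kw_k$ s.t. $y_k\le\sum_{j\in T_k}x_{i_kj}$, $y_k\le1$ for all $k$; $\sum_ix_{ij}s_i\le c_j$ for all $j$; $x_{ij}=0$ if $s_i>c_j$; $0\le x_{ij}\le1$. Let $\beta:=1/4,\gamma:=1/2,\delta:=1/4$, $\mathbb N=\{1,2,\dots\}$. For $j\in V$: $P_j^\oplus:=\{i:c_j/2<s_i\le c_j\}$, $P_j^\ominus:=\{i:c_j/4<s_i\le c_j/2\}$, $P_j^q:=\{i:\gamma^qc_j\beta<s_i\le\gamma^{q-1}c_j\beta\}$ for $q\in\mathbb N$; $d_j^q:=\sum_{i\in P_j^q}x_{ij}$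 for $q\in\mathbb N\cup\{\oplus,\ominus\}$; $v_j:=\delta c_j/\sum_{i:s_i\le c_j\beta}s_ix_{ij}$; $n_j^q:=\lceil v_jd_j^q\rceil$ ($q\in\mathbb N$); $h_j:=d_j^\ominus$ if $d_j^\ominus<2$, else $h_j:=d_j^\ominus/2$. A construction map is $\zeta:V\to\{1,2,3\}$; its slot set $\Lambda(\zeta)$ (each slot $\sigma$ has a node $\nu(\sigma)$ and class $\kappa(\sigma)\in\mathbb N\cup\{\oplus,\ominus\}$) contains, for each $j$: one slot of class $\oplus$ if $\zeta(j)=1$; two slots of class $\ominus$ if $\zeta(j)=2$; for each $q\in\mathbb N$, $n_j^q$ slots of class $q$ if $\zeta(j)=3$; no other slots on $j$. A slot allocation of $\Lambda$ is $\tau:\Lambda\to S$ with $\tau(\sigma)\in P^{\kappa(\sigma)}_{\nu(\sigma)}$; $X^\tau_i:=\{j:\exists\sigma,\nu(\sigma)=j,\tau(\sigma)=i\}$; $f_\tau(k):=\mathbf 1[T_k\cap X^\tau_{i_k}\ne\emptyset]$. Random experiment: draw $\zeta$ with $\zeta(j)$ independent over $j$, equal to $1,2,3$ with probabilities $\delta d_j^\oplus$, $\delta h_j$, $1-\delta d_j^\oplus-\delta h_j$; then, given $\zeta$, each slot $\sigma\in\Lambda(\zeta)$ independently gets $\tau(\sigma)=i$ with probability $x_{i\nu(\sigma)}/d^{\kappa(\sigma)}_{\nu(\sigma)}$ for $i\in P^{\kappa(\sigma)}_{\nu(\sigma)}$. A partial construction map is $\zeta':V\to\{1,2,3,\emptyset\}$;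 $M(\zeta')$ is the set of construction maps agreeing with $\zeta'$ where $\zeta'\ne\emptyset$; $E'(\zeta'):=\mathbb E[\sum_kf_\tau(k)w_k\mid\zeta\in M(\zeta')]$. Algorithm SA2: (i) labelling: start with all nodes unlabelled; process nodes one at a time; for current node $j$ and $a\in\{1,2,3\}$ let $\zeta'_a$ be $\zeta'$ with $j$ labelled $a$, choose $a'$ maximizing $E'(\zeta'_a)$ and set $\zeta'(j):=a'$; let $\lambda$ be the final construction map and $\Lambda:=\Lambda(\lambda)$. (ii) slot filling: with partial slot allocations $\tau':\Lambda\to S\cup\{\emptyset\}$ ($\tau'(\sigma)\in P^{\kappa(\sigma)}_{\nu(\sigma)}\cup\{\emptyset\}$), $A(\tau')$ the slot allocations extending $\tau'$, and $E(\tau'):=\mathbb E[\sum_kf_\tau(k)w_k\mid\zeta=\lambda,\tau\in A(\tau')]$: start with all slots empty, process slots one at a time, assigning to the current slot $\sigma$ the $i\in P^{\kappa(\sigma)}_{\nu(\sigma)}$ maximizing $E$ of the resulting partial slot allocation; with $\psi$ the final slot allocation, output $X^\psi$. *)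

From HB Require Import structures.
From mathcomp Require Import all_boot all_order all_algebra.
From mathcomp Require Import reals sequences exp.
Set Implicit Arguments. Unset Strict Implicit. Unset Printing Implicit Defensive.
Import Order.TTheory GRing.Theory Num.Theory.
Local Open Scope ring_scope.

(* Slot classes: (+), (-), and q in N = {1,2,...} (CQ q, with q >= 1). *)
Inductive cls := CPlus | CMinus | CQ of nat.

(* A slot is (node, class, index); slots on a node of the same class are
   distinguished by their index. *)
Definition slot (V : Type) := (V * cls * nat)%type.
Definition snode {V} (sg : slot V) : V := sg.1.1.
Definition sclass {V} (sg : slot V) : cls := sg.1.2.

(* Labels 1,2,3 of a construction map are encoded as 0,1,2 : 'I_3. *)
Definition label := 'I_3.

Section SPSC.
Variables (R : realType) (S V U : finType).
Variables (s : S -> R) (c : V -> R).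
Variables (iu : U -> S) (T : U -> {set V}) (w : U -> R).

Definition placement := {ffun S -> {set V}}.

Definition feasible (X : placement) : bool :=
  [forall j : V, \sum_(i : S) s i * (j \in X i)%:R <= c j].

Definition reward (X : placement) : R :=
  \sum_(k : U) w k * (T k :&: X (iu k) != set0)%:R.

(* R = maximum total reward of a feasible placement (the empty placement is
   feasible with reward 0 and rewards are >= 0, so the initial value 0 of the
   max is harmless). *)
Definition Ropt : R := \big[Num.max/0]_(X : placement | feasible X) reward X.

Definition LP_feasible (x : S -> V -> R) (y : U -> R) : Prop :=
  (forall k, 0 <= y k) /\
  (forall k, y k <= \sum_(j in T k) x (iu k) j) /\
  (forall k, y k <= 1) /\
  (forall j, \sum_(i : S) x i j * s i <= c j) /\
  (forall i j, c j < s i -> x i j = 0) /\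
  (forall i j, 0 <= x i j <= 1).

Definition LP_obj (y : U -> R) : R := \sum_(k : U) y k * w k.

Definition LP_optimal (x : S -> V -> R) (y : U -> R) : Prop :=
  LP_feasible x y /\
  forall x' y', LP_feasible x' y' -> LP_obj y' <= LP_obj y.

Variable x : S -> V -> R.

Definition beta : R := 1 / 4.
Definition gamma : R := 1 / 2.
Definition delta : R := 1 / 4.

Definition inP (kp : cls) (j : V) (i : S) : bool :=
  match kp with
  | CPlus => (c j / 2 < s i) && (s i <= c j)
  | CMinus => (c j / 4 < s i) && (s i <= c j / 2)
  | CQ q => (0 < q)%N && (gamma ^+ q * c j * beta < s i)
                      && (s i <= gamma ^+ q.-1 * c j * beta)
  end.

Definition dd (kp : cls) (j : V) : R := \sum_(i | inP kp j i) x i j.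

(* v_j; if the denominator vanishes then (by the MathComp convention
   a / 0 = 0) v_j = 0, in which case every d_j^q (q in N) is 0 anyway. *)
Definition vv (j : V) : R :=
  delta * c j / \sum_(i | s i <= c j * beta) s i * x i j.

Definition nn (q : nat) (j : V) : nat := `|Num.ceil (vv j * dd (CQ q) j)|%N.

Definition hh (j : V) : R :=
  if dd CMinus j < 2 then dd CMinus j else dd CMinus j / 2.

(* Every class q with P_j^q nonempty satisfies q < qbound (for positive
   sizes: i \in P_j^q gives q - 1 < 2^(q-1) <= c_j/s_i).  Slots of classes
   q >= qbound are never created since then d_j^q = 0 and n_j^q = 0. *)
Definition qbound : nat :=
  (\max_(i : S) \max_(j : V) Num.truncn (c j / s i)).+2.

Definition node_slots (j : V) (a : label) : seq (slot V) :=
  match val a with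
  | 0%N => [:: (j, CPlus, 0%N)]
  | 1%N => [:: (j, CMinus, 0%N); (j, CMinus, 1%N)]
  | _ => flatten [seq [seq (j, CQ q, t) | t <- iota 0 (nn q j)]
                 | q <- iota 1 qbound]
  end.

Definition slots (z : {ffun V -> label}) : seq (slot V) :=
  flatten [seq node_slots j (z j) | j <- enum V].

Definition lab_prob (j : V) (a : label) : R :=
  match val a with
  | 0%N => delta * dd CPlus j
  | 1%N => delta * hh j
  | _ => 1 - delta * dd CPlus j - delta * hh j
  end.

Definition slot_prob (sg : slot V) (i : S) : R :=
  if inP (sclass sg) (snode sg) i then x i (snode sg) / dd (sclass sg) (snode sg)
  else 0.

Section Alloc.
Variable z : {ffun V -> label}.

Definition slot_at (t : 'I_(size (slots z))) : slot V := tnth (in_tuple (slots z)) t.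

Definition Xof (tau : {ffun 'I_(size (slots z)) -> S}) : placement :=
  [ffun i => [set j | [exists t, (snode (slot_at t) == j) && (tau t == i)]]].

(* E(tau') = E[ sum_k f_tau(k) w_k | zeta = z, tau extends tau' ]:
   slots fixed by tau' are fixed, the other slots are drawn independently
   with the distribution of the random experiment. *)
Definition Ecnd (tp : {ffun 'I_(size (slots z)) -> option S}) : R :=
  \sum_(tau : {ffun 'I_(size (slots z)) -> S})
     (\prod_(t : 'I_(size (slots z)))
        match tp t with
        | Some i0 => (tau t == i0)%:R
        | None => slot_prob (slot_at t) (tau t)
        end) * reward (Xof tau).
End Alloc.

(* E'(zeta') = E[ sum_k f_tau(k) w_k | zeta \in M(zeta') ]: labelled nodes
   are fixed, unlabelled nodes are drawn independently. *)
Definition Eprime (zp : {ffun V -> option label}) : R :=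
  \sum_(z : {ffun V -> label})
     (\prod_(j : V) match zp j with
                    | Some a => (z j == a)%:R
                    | None => lab_prob j (z j)
                    end) * Ecnd (z := z) [ffun => None].

(* (i) labelling, processing the nodes in the order [ord]; [lam] is a
   possible outcome (any tie-breaking) of the greedy choices. *)
Definition label_upd (lam : {ffun V -> label}) (pre : seq V) (j : V) (a : label)
  : {ffun V -> option label} :=
  [ffun j' => if j' == j then Some a
              else if j' \in pre then Some (lam j') else None].

Definition SA2_labelling (ord : seq V) (lam : {ffun V -> label}) : Prop :=
  perm_eq ord (enum V) /\
  forall pre j post, ord = pre ++ j :: post ->
    forall a : label, Eprime (label_upd lam pre j a) <= Eprime (label_upd lam pre j (lam j)).

(* (ii) slot filling of Lambda = Lambda(lam), processing the slots in the
   order [sord]; [psi] is a possible outcome of the greedy choices. *)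
Definition slot_upd (lam : {ffun V -> label})
  (psi : {ffun 'I_(size (slots lam)) -> S}) (pre : seq 'I_(size (slots lam)))
  (t : 'I_(size (slots lam))) (i : S) : {ffun 'I_(size (slots lam)) -> option S} :=
  [ffun t' => if t' == t then Some i
              else if t' \in pre then Some (psi t') else None].

Definition SA2_filling (lam : {ffun V -> label})
  (sord : seq 'I_(size (slots lam))) (psi : {ffun 'I_(size (slots lam)) -> S}) : Prop :=
  perm_eq sord (enum 'I_(size (slots lam))) /\
  forall pre t post, sord = pre ++ t :: post ->
    inP (sclass (slot_at t)) (snode (slot_at t)) (psi t) /\
    forall i, inP (sclass (slot_at t)) (snode (slot_at t)) i ->
      Ecnd (slot_upd psi pre t i) <= Ecnd (slot_upd psi pre t (psi t)).

End SPSC.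

From Pilot Require Import Defs.
From HB Require Import structures.
From mathcomp Require Import all_boot all_order all_algebra.
From mathcomp Require Import reals sequences exp.
From mathcomp Require Import ring lra.
Import Order.TTheory GRing.Theory Num.Theory.
Set Implicit Arguments. Unset Strict Implicit. Unset Printing Implicit Defensive.
Local Open Scope ring_scope.

(* Every feasible placement is an integral
   LP solution, so R is at most the LP value.  Each greedy step of SA2 keeps
   the conditional expectation from decreasing (method of conditional
   expectations), so the output earns at least the expected reward of the
   random experiment.  Finally, for a user k and a node j of T_k, the slots of
   j all miss k with probability at most 1 - 3/16 x_{i_k j}, whatever the size
   class of i_k at j: the label opening that class is drawn with enough
   probability (by the capacity constraint) and each of its slots picks i_k
   with probability x_{i_k j} / d_j.  Nodes being independent, k is missed with
   probability at most exp(-3/16 y_k), and 1 - exp(-3y/16) >= (1 - 1/e) y / 4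
   on [0, 1]. *)

Section ConditionalExpectation.
Variables (R : realType) (I J : finType).
Variables (p : I -> J -> R) (E : {ffun I -> J} -> R).
Hypothesis p_ge0 : forall i a, 0 <= p i a.
Hypothesis E_ge0 : forall f, 0 <= E f.
Implicit Types (tp : {ffun I -> option J}) (g f : {ffun I -> J}).

(* [cexpect tp] is the expectation of [E] when the coordinates set by [tp] are
   fixed and the others are drawn independently from [p i]: the paper's
   E(tau') and E'(zeta'). *)
Definition coord_weight tp i a : R :=
  if tp i is Some a0 then (a == a0)%:R else p i a.

Definition cexpect tp : R :=
  \sum_(f : {ffun I -> J}) (\prod_i coord_weight tp i (f i)) * E f.

Definition fix_coord tp i0 a : {ffun I -> option J} :=
  [ffun i => if i == i0 then Some a else tp i].

Definition fix_prefix g (pre : seq I) : {ffun I -> option J} :=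
  [ffun i => if i \in pre then Some (g i) else None].

Definition fix_next g (pre : seq I) i a : {ffun I -> option J} :=
  [ffun i' => if i' == i then Some a else if i' \in pre then Some (g i') else None].

Lemma sum_mul_eqb {K : finType} (b : K) (F : K -> R) :
  \sum_(a : K) F a * (b == a)%:R = F b.
Proof.
rewrite (bigD1 b) //= eqxx mulr1 big1 ?addr0 // => a ab.
by rewrite eq_sym (negbTE ab) mulr0.
Qed.

Lemma cexpect_split tp i0 : tp i0 = None ->
  cexpect tp = \sum_a p i0 a * cexpect (fix_coord tp i0 a).
Proof.
move=> tpi0; rewrite /cexpect.
under [RHS]eq_bigr do rewrite mulr_sumr.
rewrite exchange_big /=; apply: eq_bigr => f _.
rewrite (bigD1 i0) //= {1}/coord_weight tpi0.
have others a : \prod_(i | i != i0) coord_weight (fix_coord tp i0 a) i (f i) =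
                \prod_(i | i != i0) coord_weight tp i (f i).
  by apply: eq_bigr => i /negbTE ni; rewrite /coord_weight ffunE ni.
under [RHS]eq_bigr => a _.
  rewrite (bigD1 i0) //= {1}/coord_weight ffunE eqxx others.
  over.
rewrite -(sum_mul_eqb (f i0) (fun a => p i0 a * \prod_(i | i != i0) coord_weight tp i (f i) * E f)).
by apply: eq_bigr => a _; rewrite eq_sym; ring.
Qed.

Lemma cexpect_fixed g : cexpect [ffun i => Some (g i)] = E g.
Proof.
rewrite /cexpect (bigD1 g) //= big1 ?mul1r => [|i _]; last first.
  by rewrite /coord_weight ffunE eqxx.
rewrite big1 ?addr0 // => f fg.
have [i fgi] : exists i, f i != g i.
  by apply/existsP; apply: contraR fg => /existsPn fg; apply/eqP/ffunP => i; apply/eqP/negPn.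
by rewrite (bigD1 i) //= {1}/coord_weight ffunE (negbTE fgi) !mul0r.
Qed.

Lemma cexpect_ge0 tp : 0 <= cexpect tp.
Proof.
apply: sumr_ge0 => f _; rewrite mulr_ge0 // prodr_ge0 // => i _.
by rewrite /coord_weight; case: (tp i).
Qed.

(* The method of conditional expectations.  Weights summing to less than one
   are allowed: the slots of an empty size class have weight 0. *)
Lemma cexpect_greedy_le (ord : seq I) g :
  (forall i, \sum_a p i a <= 1) -> perm_eq ord (enum I) ->
  (forall pre i post, ord = pre ++ i :: post -> forall a, p i a != 0 ->
      cexpect (fix_next g pre i a) <= cexpect (fix_next g pre i (g i))) ->
  cexpect [ffun => None] <= E g.
Proof.
move=> p_le1 ord_perm greedy.
have ord_uniq : uniq ord by rewrite (perm_uniq ord_perm) enum_uniq.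
suff H post pre : ord = pre ++ post -> cexpect (fix_prefix g pre) <= E g.
  by rewrite (_ : [ffun => None] = fix_prefix g [::]) ?(H ord) //; apply/ffunP => i; rewrite !ffunE.
elim: post pre => [|i post IH] pre ord_eq.
  suff -> : fix_prefix g pre = [ffun i => Some (g i)] by rewrite cexpect_fixed.
  apply/ffunP => i; rewrite ord_eq cats0 in ord_perm.
  by rewrite !ffunE (perm_mem ord_perm) mem_enum.
have i_notin_pre : i \notin pre.
  move: ord_uniq; rewrite ord_eq cat_uniq => /and3P[_ + _]; apply: contra => ipre.
  by apply/hasP; exists i => //; rewrite inE eqxx.
have next_eq a : fix_coord (fix_prefix g pre) i a = fix_next g pre i a.
  by apply/ffunP => i'; rewrite !ffunE.
have next_le : cexpect (fix_next g pre i (g i)) <= E g.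
  rewrite (_ : fix_next _ _ _ _ = fix_prefix g (rcons pre i)); last first.
    by apply/ffunP => i'; rewrite !ffunE mem_rcons inE; case: eqP => [->|].
  by apply: IH; rewrite cat_rcons.
rewrite (cexpect_split (i0 := i)); last by rewrite ffunE (negbTE i_notin_pre).
apply: le_trans next_le.
apply: (le_trans (y := \sum_a p i a * cexpect (fix_next g pre i (g i)))).
  apply: ler_sum => a _; rewrite next_eq.
  have [->|pa] := eqVneq (p i a) 0; first by rewrite !mul0r.
  by rewrite ler_wpM2l // (greedy _ _ _ ord_eq).
by rewrite -mulr_suml ler_piMl ?cexpect_ge0.
Qed.

End ConditionalExpectation.

Section NumericFacts.
Variable R : realType.
Implicit Types t v a : R.

Lemma divrr_le1 (d : R) : d / d <= 1.
Proof. by have [->|d0] := eqVneq d 0; rewrite ?mul0r ?divff. Qed.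

Lemma mulr_div_id (d a : R) : 0 <= a <= d -> d * (a / d) = a.
Proof.
case/andP=> a0 ad; have [d0|d0] := eqVneq d 0; last by rewrite mulrC mulfVK.
by move: ad; rewrite d0 mul0r => a_le0; apply/eqP; rewrite eq_le a_le0 a0.
Qed.

Lemma prod_nat_bool {K : finType} (P : pred K) :
  \prod_(k : K) (P k)%:R = ([forall k, P k])%:R :> R.
Proof.
have [/forallP P_all|/forallPn [k Pk]] := boolP [forall k, P k].
  by rewrite big1 // => k _; rewrite P_all.
by rewrite (bigD1 k) //= (negbTE Pk) mul0r.
Qed.

Definition exp_taylor2 t : R := 1 + t + t ^+ 2 / 2.

Lemma exp_taylor2_gt0 t : 0 <= t -> 0 < exp_taylor2 t.
Proof. by move=> t0; have := sqr_ge0 t; rewrite /exp_taylor2; lra. Qed.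

Lemma exp_taylor2_le_expR t : 0 <= t -> exp_taylor2 t <= expR t.
Proof.
move=> t0; apply: le_trans (_ : series (exp_coeff t) 3 <= _).
  rewrite /series /= !big_nat_recr //= big_nil /exp_coeff /=.
  by rewrite expr0 expr1 !factS fact0 /= add0r !divr1 mul1n muln1.
apply: nondecreasing_cvgn_le; last exact: is_cvg_series_exp_coeff.
move=> n m nm; apply: (nondecreasing_series (u_ := exp_coeff t) (P := predT)) => //.
by move=> k _ _; rewrite /exp_coeff /= divr_ge0 // exprn_ge0.
Qed.

Lemma expRN_mul_taylor2_le1 t : 0 <= t -> expR (- t) * exp_taylor2 t <= 1.
Proof.
move=> t0; have := exp_taylor2_le_expR t0; have := expRxMexpNx_1 t.
have := expR_ge0 (- t); nra.
Qed.

Lemma one_sub_pow_le_expR (r a : R) n : 0 <= r <= 1 -> a <= n%:R * r ->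
  (1 - r) ^+ n <= expR (- a).
Proof.
move=> /andP[r0 r1] a_le; apply: (le_trans (y := expR (- r) ^+ n)).
  apply: lerXn2r; rewrite ?nnegrE ?expR_ge0 //; first lra.
  by have := expR_ge1Dx (- r); lra.
by rewrite -expRM_natl ler_expR mulrN lerN2.
Qed.

Lemma expRN1_ge : 1 / 3 <= expR (-1) :> R.
Proof.
have -> : -1 = 6%:R * (- (1 / 6)) :> R by field.
rewrite expRM_natl.
have h : 5 / 6 <= expR (- (1 / 6)) :> R by apply: le_trans (expR_ge1Dx _); lra.
have h6 : (5 / 6) ^+ 6 <= expR (- (1 / 6)) ^+ 6 :> R.
  by rewrite lerXn2r // ?nnegrE ?expR_ge0 //; lra.
apply: le_trans h6; rewrite !exprS expr0; lra.
Qed.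

(* [(1 - e^-1)/4 <= 1/6], and [e^-t <= 1/exp_taylor2 t <= 1 - y/6] for
   [t = 3y/16], [0 <= y <= 1]. *)
Lemma linear_le_one_sub_expRN (y : R) : 0 <= y <= 1 ->
  y * ((1 - expR (-1)) / 4) <= 1 - expR (- (3 / 16 * y)).
Proof.
move=> /andP[y0 y1]; set t := 3 / 16 * y.
have t0 : 0 <= t by rewrite /t; lra.
have P0 := exp_taylor2_gt0 t0; have E := expRN_mul_taylor2_le1 t0.
have Q : 1 <= (1 - y / 6) * exp_taylor2 t by rewrite /exp_taylor2 /t; nra.
have : expR (- t) <= 1 - y / 6.
  by rewrite -(ler_pM2r P0); apply: le_trans Q.
have := expRN1_ge; nra.
Qed.

(* [t |-> (exp_taylor2 t - 1) / exp_taylor2 t] lies above its chords through 0. *)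
Lemma exp_taylor2_ratio_scale v a : 0 <= v -> 0 <= a <= 1 ->
  a * (exp_taylor2 v - 1) * exp_taylor2 (v * a) <=
  (exp_taylor2 (v * a) - 1) * exp_taylor2 v.
Proof.
move=> v0 /andP[a0 a1]; rewrite -subr_ge0 /exp_taylor2.
have -> : (1 + v * a + (v * a) ^+ 2 / 2 - 1) * (1 + v + v ^+ 2 / 2)
    - a * (1 + v + v ^+ 2 / 2 - 1) * (1 + v * a + (v * a) ^+ 2 / 2)
  = v * a * (v / 2 * (1 - a) + v ^+ 2 / 2 * (1 - a ^+ 2) + v ^+ 3 / 4 * a * (1 - a)).
  by field.
apply: mulr_ge0; first exact: mulr_ge0.
have a2 : a ^+ 2 <= 1 by nra.
have v3 : 0 <= v ^+ 3 by apply: exprn_ge0.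
have a1' : 0 <= 1 - a by lra.
have := mulr_ge0 (mulr_ge0 v3 a0) a1'.
have : 0 <= v ^+ 2 / 2 * (1 - a ^+ 2) by rewrite mulr_ge0 ?divr_ge0 ?sqr_ge0 ?subr_ge0.
have : 0 <= v / 2 * (1 - a) by apply: mulr_ge0; lra.
lra.
Qed.

Lemma exp_taylor2_gain_ge (L sg v : R) : 0 < v -> sg * v = 1 / 4 ->
  sg <= L -> 1 / 4 + sg / 2 <= L ->
  3 / 16 * exp_taylor2 v <= L * (exp_taylor2 v - 1).
Proof.
move=> v0 sv Ls Ls2; rewrite /exp_taylor2.
have -> : 1 + v + v ^+ 2 / 2 - 1 = v * (1 + v / 2) by field.
have K0 : 0 <= v * (1 + v / 2) by apply: mulr_ge0; lra.
have sK : sg * (v * (1 + v / 2)) = (1 + v / 2) / 4 by rewrite mulrA sv; field.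
have [vh|vh] := leP v (1 / 2).
  apply: le_trans (ler_wpM2r K0 Ls); rewrite sK; nra.
apply: le_trans (ler_wpM2r K0 Ls2).
rewrite (_ : (1 / 4 + sg / 2) * _ = v * (1 + v / 2) / 4 + sg * (v * (1 + v / 2)) / 2).
  by rewrite sK; nra.
by ring.
Qed.

(* Used with [L] the probability of label 3, [sg] the small load of a node
   divided by its capacity, [v = v_j], [a = x_ij] and [E] the probability that
   none of the [n_j^q >= v_j d_j^q] slots of class [q] picks [i], so that
   [E <= exp (- v a)]. *)
Lemma small_gain_bound (L sg v a E : R) : 0 < v -> sg * v = 1 / 4 ->
  sg <= L -> 1 / 4 + sg / 2 <= L -> 0 <= a <= 1 -> 0 <= E ->
  E * exp_taylor2 (v * a) <= 1 -> 3 / 16 * a <= L * (1 - E).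
Proof.
move=> v0 sv Ls Ls2 /andP[a0 a1] E0 EP.
have va0 : 0 <= v * a by apply: mulr_ge0 => //; lra.
have Pa := exp_taylor2_gt0 va0; have Pv := exp_taylor2_gt0 (ltW v0).
have scale := exp_taylor2_ratio_scale (ltW v0) (introT andP (conj a0 a1)).
have gain := exp_taylor2_gain_ge v0 sv Ls Ls2.
have sg0 : 0 < sg by nra.
have L0 : 0 <= L by lra.
have hC : exp_taylor2 (v * a) - 1 <= (1 - E) * exp_taylor2 (v * a) by nra.
rewrite -(ler_pM2r (mulr_gt0 Pv Pa)).
set Tv := exp_taylor2 v in Pv scale gain *; set Ta := exp_taylor2 (v * a) in Pa scale hC *.
have step1 : 3 / 16 * a * (Tv * Ta) <= L * (a * (Tv - 1) * Ta).
  rewrite (_ : _ * (Tv * Ta) = a * (3 / 16 * Tv) * Ta); last by ring.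
  rewrite (_ : L * _ = a * (L * (Tv - 1)) * Ta); last by ring.
  by rewrite ler_wpM2r ?(ltW Pa) // ler_wpM2l.
apply: (le_trans step1); apply: (le_trans (ler_wpM2l L0 scale)).
rewrite (_ : L * (1 - E) * (Tv * Ta) = L * ((1 - E) * Ta * Tv)); last by ring.
by rewrite ler_wpM2l // ler_wpM2r ?(ltW Pv).
Qed.

Lemma medium_gain_bound (d a : R) : 0 < d -> 0 <= a -> a <= 1 -> a <= d ->
  3 / 16 * a <= 1 / 4 * (if d < 2 then d else d / 2) * (1 - (1 - a / d) ^+ 2).
Proof.
move=> d0 a0 a1 ad; set r := a / d.
have ar : a = r * d by rewrite /r mulfVK // gt_eqF.
have r0 : 0 <= r by rewrite /r divr_ge0 // ltW.
have r1 : r <= 1 by rewrite /r ler_pdivrMr // mul1r.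
rewrite ar; case: ifP => d2; first nra.
have d2' : 2 <= d by rewrite leNgt d2.
have : r <= 1 / 2 by rewrite /r ler_pdivrMr //; nra.
nra.
Qed.

End NumericFacts.

Section Rounding.
Variables (R : realType) (S V U : finType) (s : S -> R) (c : V -> R).
Variables (iu : U -> S) (T : U -> {set V}) (w : U -> R) (x : S -> V -> R).
Hypothesis s_gt0 : forall i, 0 < s i.
Hypothesis c_gt0 : forall j, 0 < c j.
Hypothesis w_gt0 : forall k, 0 < w k.
Hypothesis x_ge0 : forall i j, 0 <= x i j.
Hypothesis x_le1 : forall i j, x i j <= 1.
Hypothesis x_cap : forall j, \sum_i x i j * s i <= c j.
Hypothesis x_oversized : forall i j, c j < s i -> x i j = 0.

Local Notation inP := (inP s c).
Local Notation dd := (dd s c x).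
Local Notation hh := (hh s c x).
Local Notation vv := (vv s c x).
Local Notation nn := (nn s c x).
Local Notation qbound := (qbound s c).
Local Notation slot_prob := (slot_prob s c x).
Local Notation lab_prob := (lab_prob s c x).
Local Notation node_slots := (node_slots s c x).
Local Notation slots := (slots s c x).
Local Notation reward := (reward iu T w).
Local Notation Xof z := (@Xof R S V s c x z).
Local Notation slot_at z := (@slot_at R S V s c x z).
Local Notation Ecnd z := (@Ecnd R S V U s c iu T w x z).
Local Notation Eprime := (Eprime s c iu T w x).

Lemma dd_ge0 kp j : 0 <= dd kp j.
Proof. exact: sumr_ge0. Qed.

Lemma x_le_dd kp j i : inP kp j i -> x i j <= dd kp j.
Proof. by move=> ij; rewrite /Defs.dd (bigD1 i) //= lerDl sumr_ge0. Qed.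

Lemma slot_prob_ge0 sg i : 0 <= slot_prob sg i.
Proof. by rewrite /Defs.slot_prob; case: ifP => // _; rewrite divr_ge0 ?dd_ge0. Qed.

Lemma sum_slot_prob sg :
  \sum_i slot_prob sg i = dd (sclass sg) (snode sg) / dd (sclass sg) (snode sg).
Proof. by rewrite /Defs.slot_prob -big_mkcond /= mulr_suml. Qed.

Lemma reward_ge0 X : 0 <= reward X.
Proof. by apply: sumr_ge0 => k _; rewrite mulr_ge0 ?(ltW (w_gt0 k)). Qed.

Lemma Ecnd_ge0 z tp : 0 <= Ecnd z tp.
Proof.
exact: (cexpect_ge0 (p := fun t => slot_prob (slot_at z t))
  (E := fun tau => reward (Xof z tau)) (fun _ => slot_prob_ge0 _) (fun _ => reward_ge0 _)).
Qed.

Lemma lab_prob_sum j : \sum_a lab_prob j a = 1.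
Proof. by rewrite !big_ord_recr big_ord0 /Defs.lab_prob /=; ring. Qed.

Definition small_load j : R := \sum_(i | s i <= c j * beta R) s i * x i j.

Lemma small_load_ge0 j : 0 <= small_load j.
Proof. by apply: sumr_ge0 => i _; rewrite mulr_ge0 ?(ltW (s_gt0 i)). Qed.

(* Items of [P_j^+] and [P_j^-] have size more than [c_j/2] and [c_j/4]. *)
Lemma capacity_split j :
  c j / 2 * dd CPlus j + c j / 4 * dd CMinus j + small_load j <= c j.
Proof.
apply: le_trans (x_cap j).
rewrite /Defs.dd /small_load !mulr_sumr big_mkcond [X in _ + X + _]big_mkcond.
rewrite [X in _ + X]big_mkcond -!big_split /=; apply: ler_sum => i _.
have := x_ge0 i j; have := s_gt0 i; have := c_gt0 j; rewrite /beta.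
by case: ifP => [/andP[? ?]|_]; case: ifP => [/andP[? ?]|_]; case: ifP => [?|_];
  rewrite ?addr0 ?add0r; nra.
Qed.

Lemma capacity_split_normalized j :
  dd CPlus j / 2 + dd CMinus j / 4 + small_load j / c j <= 1.
Proof.
have cj := c_gt0 j; rewrite -(ler_pM2r cj) mul1r.
apply: le_trans (capacity_split j); rewrite le_eqVlt; apply/orP; left; apply/eqP.
by field; rewrite gt_eqF.
Qed.

Lemma lab_prob_bounds j : [/\ 0 <= delta R * dd CPlus j, 0 <= delta R * hh j &
  0 <= 1 - delta R * dd CPlus j - delta R * hh j].
Proof.
have := capacity_split_normalized j; have := divr_ge0 (small_load_ge0 j) (ltW (c_gt0 j)).
have := dd_ge0 CPlus j; have := dd_ge0 CMinus j.
by rewrite /Defs.hh /delta; case: ifP => _ *; split; lra.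
Qed.

Lemma lab_prob_ge0 j a : 0 <= lab_prob j a.
Proof.
have [? ? ?] := lab_prob_bounds j.
by rewrite /Defs.lab_prob; case: a => [[|[|m]] ?].
Qed.

Lemma Eprime_le_SA2_reward ord lam sord psi :
  SA2_labelling s c iu T w x ord lam -> SA2_filling iu T w sord psi ->
  Eprime [ffun => None] <= reward (Xof lam psi).
Proof.
move=> [ord_perm lab_greedy] [sord_perm fill_greedy].
apply: (le_trans (y := Ecnd lam [ffun => None])).
  apply: (cexpect_greedy_le (p := lab_prob) (E := fun z => Ecnd z [ffun => None])
    lab_prob_ge0 (fun _ => Ecnd_ge0 _) (ord := ord)) => //.
  - by move=> j; rewrite lab_prob_sum.
  - by move=> pre j post ord_eq a _; exact: lab_greedy _ _ _ ord_eq a.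
apply: (cexpect_greedy_le (p := fun t => slot_prob (slot_at lam t))
  (E := fun tau => reward (Xof lam tau)) (fun _ => slot_prob_ge0 _) (fun _ => reward_ge0 _)
  (ord := sord)) => //.
  by move=> t; rewrite sum_slot_prob divrr_le1.
move=> pre t post sord_eq i; rewrite /Defs.slot_prob.
case: ifP => [i_in _|_]; last by rewrite eqxx.
by have [_] := fill_greedy pre t post sord_eq; apply.
Qed.

Lemma Ropt_le_LP_obj (xo : S -> V -> R) (yo : U -> R) :
  LP_optimal s c iu T w xo yo -> Ropt s c iu T w <= LP_obj w yo.
Proof.
move=> [[yo0 _] yo_opt].
have obj0 : 0 <= LP_obj w yo by apply: sumr_ge0 => k _; rewrite mulr_ge0 ?(ltW (w_gt0 k)).
apply: bigmax_le => // X /forallP X_cap.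
pose xX i j : R := (j \in X i)%:R.
pose yX k : R := (T k :&: X (iu k) != set0)%:R.
have -> : reward X = LP_obj w yX by apply: eq_bigr => k _; rewrite mulrC.
apply: yo_opt (xX) _ _; split; first by move=> k; exact: ler0n.
split.
  move=> k; rewrite /yX; have [[j]|_] := set0Pn; last exact: sumr_ge0.
  rewrite inE => /andP[jT jX].
  by rewrite (bigD1 j) //= /xX jX lerDl sumr_ge0.
split; first by move=> k; rewrite /yX; case: (_ != _).
split.
  by move=> j; apply: le_trans (X_cap j); under eq_bigr do rewrite mulrC.
split; last by move=> i j; rewrite /xX; case: (j \in X i); rewrite /= ?ler01 ?lexx.
move=> i j cs; rewrite /xX; case: (boolP (j \in X i)) => //= jX.
suff : s i <= c j by rewrite leNgt cs.
apply: le_trans (X_cap j); rewrite (bigD1 i) //= jX mulr1 lerDl.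
by apply: sumr_ge0 => i' _; rewrite mulr_ge0 ?(ltW (s_gt0 i')).
Qed.

(* [node_miss k j] is the probability that no slot of node [j] serves user [k];
   [node_mass j] is the total mass of the slot distribution of [j]. *)
Definition serves k (sg : slot V) i := (snode sg \in T k) && (i == iu k).
Definition slot_mass sg : R := \sum_i slot_prob sg i.
Definition slot_miss k sg : R := \sum_i slot_prob sg i * (~~ serves k sg i)%:R.
Definition node_mass j : R :=
  \sum_a lab_prob j a * \prod_(sg <- node_slots j a) slot_mass sg.
Definition node_miss k j : R :=
  \sum_a lab_prob j a * \prod_(sg <- node_slots j a) slot_miss k sg.

Lemma covered_Xof z tau k : (T k :&: Xof z tau (iu k) != set0) =
  [exists t, serves k (slot_at z t) (tau t)].
Proof.
apply/set0Pn/existsP => [[j]|[t /andP[tT ti]]].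
  rewrite inE => /andP[jT]; rewrite ffunE inE => /existsP[t /andP[/eqP tj ti]].
  by exists t; rewrite /serves tj jT.
exists (snode (slot_at z t)); rewrite inE tT ffunE inE.
by apply/existsP; exists t; rewrite eqxx.
Qed.

Lemma Ecnd_none z : Ecnd z [ffun => None] =
  \sum_k w k * (\prod_t slot_mass (slot_at z t) - \prod_t slot_miss k (slot_at z t)).
Proof.
rewrite /Defs.Ecnd /Defs.reward; under [LHS]eq_bigr do rewrite mulr_sumr.
rewrite exchange_big /=; apply: eq_bigr => k _.
rewrite /slot_mass /slot_miss !bigA_distr_bigA /= -sumrB mulr_sumr.
apply: eq_bigr => tau _; rewrite covered_Xof.
have -> : ([exists t, serves k (slot_at z t) (tau t)])%:R =
          1 - (\prod_t (~~ serves k (slot_at z t) (tau t))%:R) :> R.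
  by rewrite prod_nat_bool -negb_exists; case: [exists t, _]; rewrite ?subr0 ?subrr.
rewrite big_split /=; under eq_bigr do rewrite ffunE.
ring.
Qed.

Lemma prod_slots z (G : slot V -> R) :
  \prod_t G (slot_at z t) = \prod_j \prod_(sg <- node_slots j (z j)) G sg.
Proof.
by rewrite /Defs.slot_at -(big_tnth _ _ _ xpredT) /Defs.slots big_flatten big_map enumT.
Qed.

Lemma Eprime_none :
  Eprime [ffun => None] = \sum_k w k * (\prod_j node_mass j - \prod_j node_miss k j).
Proof.
rewrite /Defs.Eprime.
under [LHS]eq_bigr => z _ do rewrite Ecnd_none mulr_sumr.
rewrite exchange_big /=; apply: eq_bigr => k _.
rewrite /node_mass /node_miss !bigA_distr_bigA /= -sumrB mulr_sumr.
apply: eq_bigr => z _; rewrite !prod_slots.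
under eq_bigr do rewrite ffunE.
rewrite !big_split /=; ring.
Qed.

Definition small_slots_prod (G : slot V -> R) j : R :=
  \prod_(q <- iota 1 qbound) \prod_(t <- iota 0 (nn q j)) G (j, CQ q, t).

Lemma node_label_sum j (G : slot V -> R) :
  \sum_a lab_prob j a * \prod_(sg <- node_slots j a) G sg =
  delta R * dd CPlus j * G (j, CPlus, 0%N)
  + delta R * hh j * (G (j, CMinus, 0%N) * G (j, CMinus, 1%N))
  + (1 - delta R * dd CPlus j - delta R * hh j) * small_slots_prod G j.
Proof.
rewrite !big_ord_recr big_ord0 /Defs.lab_prob /Defs.node_slots [Defs.qbound _ _]lock /=.
rewrite big_seq1 !big_cons big_nil mulr1 add0r -lock big_flatten big_map.
by congr (_ + _ * _); apply: eq_bigr => q _; rewrite big_map.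
Qed.

Lemma slot_mass_eq j kp t : slot_mass (j, kp, t) = dd kp j / dd kp j.
Proof. exact: sum_slot_prob. Qed.

Lemma slot_mass_sub_miss k sg :
  slot_mass sg - slot_miss k sg = (snode sg \in T k)%:R * slot_prob sg (iu k).
Proof.
rewrite /slot_mass /slot_miss -sumrB.
rewrite (eq_bigr (fun i => slot_prob sg i * (serves k sg i)%:R)); last first.
  by move=> i _; case: (serves k sg i); rewrite /= ?mulr1 ?mulr0 ?subr0 ?subrr.
rewrite /serves; case: (snode sg \in T k) => /=; last first.
  by rewrite mul0r big1 // => i _; rewrite mulr0.
rewrite mul1r (bigD1 (iu k)) //= eqxx mulr1 big1 ?addr0 // => i /negbTE ->.
by rewrite mulr0.
Qed.

Lemma slot_miss_ge0 k sg : 0 <= slot_miss k sg.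
Proof. by apply: sumr_ge0 => i _; rewrite mulr_ge0 ?slot_prob_ge0. Qed.

Lemma slot_miss_le_mass k sg : slot_miss k sg <= slot_mass sg.
Proof. by rewrite -subr_ge0 slot_mass_sub_miss mulr_ge0 ?slot_prob_ge0. Qed.

Lemma slot_miss_le1 k sg : slot_miss k sg <= 1.
Proof.
by apply: le_trans (slot_miss_le_mass k sg) _; rewrite /slot_mass sum_slot_prob divrr_le1.
Qed.

Lemma slot_miss_eq k j kp t : j \in T k -> inP kp j (iu k) -> dd kp j != 0 ->
  slot_miss k (j, kp, t) = 1 - x (iu k) j / dd kp j.
Proof.
move=> jT ip d0; have := slot_mass_sub_miss k (j, kp, t).
rewrite slot_mass_eq divff // /= jT mul1r /Defs.slot_prob /= ip => <-.
by rewrite opprB addrC subrK.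
Qed.

Lemma dd_neq0_of_nn_gt0 q j : (0 < nn q j)%N -> dd (CQ q) j != 0.
Proof. by apply: contraTneq => d0; rewrite /Defs.nn d0 mulr0 ceil0. Qed.

Lemma small_slots_prod_mass j : small_slots_prod slot_mass j = 1.
Proof.
rewrite /small_slots_prod big1_seq // => q _; rewrite big1_seq // => t.
rewrite mem_iota add0n => /andP[_ tn]; rewrite slot_mass_eq divff //.
by apply: dd_neq0_of_nn_gt0; apply: leq_ltn_trans tn.
Qed.

Lemma node_mass_eq1 j : node_mass j = 1.
Proof.
rewrite /node_mass node_label_sum small_slots_prod_mass !slot_mass_eq mulr1.
rewrite -mulrA mulr_div_id ?dd_ge0 ?lexx // -(mulrA (delta R)).
have -> : hh j * (dd CMinus j / dd CMinus j * (dd CMinus j / dd CMinus j)) = hh j.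
  rewrite /Defs.hh; have [->|d0] := eqVneq (dd CMinus j) 0; first by rewrite ltr0n /= mul0r.
  by rewrite divff // !mulr1.
ring.
Qed.

Lemma node_mass_sub_miss k j : node_mass j - node_miss k j =
  delta R * dd CPlus j * (slot_mass (j, CPlus, 0%N) - slot_miss k (j, CPlus, 0%N))
  + delta R * hh j * (slot_mass (j, CMinus, 0%N) * slot_mass (j, CMinus, 1%N)
                      - slot_miss k (j, CMinus, 0%N) * slot_miss k (j, CMinus, 1%N))
  + (1 - delta R * dd CPlus j - delta R * hh j) * (1 - small_slots_prod (slot_miss k) j).
Proof. by rewrite /node_mass /node_miss !node_label_sum small_slots_prod_mass; ring. Qed.

Lemma small_slots_prod_miss_ge0 k j : 0 <= small_slots_prod (slot_miss k) j.
Proof. by do 2!apply: prodr_ge0 => ? _; exact: slot_miss_ge0. Qed.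

Lemma small_slots_prod_miss_le1 k j : small_slots_prod (slot_miss k) j <= 1.
Proof.
apply: prodr_ile1 => q _; rewrite prodr_ge0 => [|t _]; last exact: slot_miss_ge0.
by apply: prodr_ile1 => t _; rewrite slot_miss_ge0 slot_miss_le1.
Qed.

Lemma gammaX n : gamma R ^+ n = (2 ^+ n)^-1.
Proof. by rewrite /gamma expr_div_n expr1n div1r. Qed.

(* [s_i <= c_j / 2^(q+1)] and [q <= 2^(q+1)] give [q <= c_j / s_i]. *)
Lemma class_lt_qbound q j i : inP (CQ q) j i -> (q < qbound)%N.
Proof.
case/andP=> /andP[q0 _]; rewrite gammaX /beta => s_le.
have si := s_gt0 i; have cj := c_gt0 j; have e0 : 0 < 2 ^+ q.-1 :> R by exact: exprn_gt0.
have s_mul_le : s i * 2 ^+ q.-1 * 4 <= c j.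
  have -> : c j = (2 ^+ q.-1)^-1 * c j * (1 / 4) * (2 ^+ q.-1 * 4) by field; rewrite gt_eqF.
  by rewrite -mulrA ler_wpM2r // mulr_ge0 // ltW.
have q_le : (q%:R : R) <= 2 ^+ q.-1 * 4.
  have : (q.-1 < 2 ^ q.-1)%N by exact: ltn_expl.
  rewrite -(ltr_nat R) natrX => q_lt.
  have : (1 : R) <= 2 ^+ q.-1 by apply: exprn_ege1; lra.
  have -> : (q%:R : R) = q.-1%:R + 1 by rewrite natr1 prednK.
  lra.
have qt : (q <= Num.truncn (c j / s i))%N.
  have q_le_ratio : (q%:R : R) <= c j / s i.
    rewrite ler_pdivlMr //; apply: le_trans s_mul_le.
    by rewrite [_ * s i]mulrC -mulrA ler_wpM2l // ltW.
  by rewrite truncn_ge_nat // divr_ge0 // ltW.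
rewrite /Defs.qbound ltnS; apply/leqW/(leq_trans qt)/(leq_trans _ (leq_bigmax i)).
exact: (leq_bigmax (F := fun j0 => Num.truncn (c j0 / s i)) j).
Qed.

Lemma size_class_cases i j : x i j = 0 \/ inP CPlus j i \/ inP CMinus j i \/
  exists q, inP (CQ q) j i /\ s i <= c j * beta R.
Proof.
have si := s_gt0 i; have cj := c_gt0 j.
have [/x_oversized|sc] := ltrP (c j) (s i); first by left.
have [h1|h1] := ltrP (c j / 2) (s i); first by right; left; rewrite /Defs.inP h1 sc.
have [h2|h2] := ltrP (c j / 4) (s i); first by right; right; left; rewrite /Defs.inP h2 h1.
right; right; right.
have sb : s i <= c j * beta R by rewrite /beta; lra.
pose P n := gamma R ^+ n * c j * beta R < s i.
have exP : exists n, P n.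
  exists (Num.truncn (c j * beta R / s i)).+1; set a := c j * beta R / s i.
  have a1 : a < (Num.truncn a).+1%:R by rewrite -truncn_le_nat.
  have a2 : ((Num.truncn a).+1%:R : R) < 2 ^+ (Num.truncn a).+1.
    by rewrite -natrX ltr_nat ltn_expl.
  rewrite /P gammaX mulrAC -mulrA mulrC ltr_pdivrMr ?exprn_gt0 //.
  by move: (lt_trans a1 a2); rewrite /a ltr_pdivrMr //; nra.
case: (ex_minnP exP) => q Pq qmin.
have q0 : (0 < q)%N.
  by move: Pq; case: q {qmin} => //; rewrite /P expr0 mul1r ltNge sb.
have nP : ~~ P q.-1.
  apply/negP => /qmin; by case: q q0 {Pq qmin} => // n _; rewrite /= ltnn.
exists q; split => //; rewrite /Defs.inP q0 /=.
by apply/andP; split; [exact: Pq | rewrite leNgt; exact: nP].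
Qed.

Lemma plus_class_gain k j : j \in T k -> inP CPlus j (iu k) ->
  3 / 16 * x (iu k) j <=
  delta R * dd CPlus j * (slot_mass (j, CPlus, 0%N) - slot_miss k (j, CPlus, 0%N)).
Proof.
move=> jT ip; rewrite slot_mass_sub_miss /= jT mul1r /Defs.slot_prob (ifT _ _ ip).
rewrite -[delta R * _ * _]mulrA mulr_div_id ?x_ge0 ?x_le_dd //.
by rewrite /delta; have := x_ge0 (iu k) j; lra.
Qed.

Lemma minus_class_gain k j : j \in T k -> inP CMinus j (iu k) ->
  3 / 16 * x (iu k) j <=
  delta R * hh j * (slot_mass (j, CMinus, 0%N) * slot_mass (j, CMinus, 1%N)
                    - slot_miss k (j, CMinus, 0%N) * slot_miss k (j, CMinus, 1%N)).
Proof.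
move=> jT im; have xd := x_le_dd im; have x0 := x_ge0 (iu k) j.
have [d0|d0] := eqVneq (dd CMinus j) 0.
  have -> : x (iu k) j = 0 by apply/eqP; rewrite eq_le x0 -d0 xd.
  by rewrite /Defs.hh d0 ltr0n /= !(mulr0, mul0r).
rewrite !slot_mass_eq divff // mulr1 !(slot_miss_eq _ jT im d0) -expr2 /Defs.hh /delta.
by apply: medium_gain_bound; rewrite ?x_le1 // lt0r d0 dd_ge0.
Qed.

Lemma small_label_prob_ge j :
  small_load j / c j <= 1 - delta R * dd CPlus j - delta R * hh j /\
  1 / 4 + small_load j / c j / 2 <= 1 - delta R * dd CPlus j - delta R * hh j.
Proof.
have := capacity_split_normalized j; have := dd_ge0 CPlus j; have := dd_ge0 CMinus j.
by rewrite /Defs.hh /delta; case: ifP => [/ltW|_] *; split; lra.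
Qed.

Lemma nn_ge q j : vv j * dd (CQ q) j <= (nn q j)%:R.
Proof.
have vv0 : 0 <= vv j.
  apply: divr_ge0; last exact: small_load_ge0.
  by apply: mulr_ge0; [rewrite /delta; lra | exact: ltW].
have h0 : 0 <= vv j * dd (CQ q) j by rewrite mulr_ge0 ?dd_ge0.
by rewrite /Defs.nn natr_absz ger0_norm ?ceil_ge // ceil_ge0; lra.
Qed.

Lemma small_slots_prod_miss_le k j q : j \in T k -> inP (CQ q) j (iu k) ->
  (0 < nn q j)%N ->
  small_slots_prod (slot_miss k) j <= (1 - x (iu k) j / dd (CQ q) j) ^+ nn q j.
Proof.
move=> jT iq n0; have d0 := dd_neq0_of_nn_gt0 n0.
have q0 : (0 < q)%N by case/andP: iq => /andP[].
have q_in : q \in iota 1 qbound.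
  by rewrite mem_iota q0 add1n ltnS ltnW // (class_lt_qbound iq).
rewrite /small_slots_prod (bigD1_seq q q_in (iota_uniq 1 qbound)).
rewrite (eq_big_seq (fun _ => 1 - x (iu k) j / dd (CQ q) j)) => [|t _]; last first.
  exact: slot_miss_eq.
rewrite (_ : iota 0 _ = index_iota 0 (nn q j)) ?prodr_const_nat ?subn0; last first.
  by rewrite /index_iota subn0.
rewrite ler_piMr ?exprn_ge0 //; first by rewrite -(slot_miss_eq 0%N jT iq d0) slot_miss_ge0.
apply: prodr_ile1 => q' _; rewrite prodr_ge0 => [|t _]; last exact: slot_miss_ge0.
by apply: prodr_ile1 => t _; rewrite slot_miss_ge0 slot_miss_le1.
Qed.

Lemma small_class_gain k j q : j \in T k -> inP (CQ q) j (iu k) ->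
  s (iu k) <= c j * beta R ->
  3 / 16 * x (iu k) j <=
  (1 - delta R * dd CPlus j - delta R * hh j) * (1 - small_slots_prod (slot_miss k) j).
Proof.
move=> jT iq s_small; have x0 := x_ge0 (iu k) j; have cj := c_gt0 j.
have [L_ge_load L_ge_half] := small_label_prob_ge j.
have [->|xn0] := eqVneq (x (iu k) j) 0.
  have := small_slots_prod_miss_le1 k j; have := small_load_ge0 j.
  have := divr_ge0 (small_load_ge0 j) (ltW cj); nra.
have xp : 0 < x (iu k) j by rewrite lt0r xn0.
have load_gt0 : 0 < small_load j.
  apply: lt_le_trans (_ : s (iu k) * x (iu k) j <= _); first exact: mulr_gt0.
  rewrite /small_load (bigD1 (iu k)) //= lerDl sumr_ge0 // => i _.
  by rewrite mulr_ge0 ?(ltW (s_gt0 i)).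
have vp : 0 < vv j by rewrite /Defs.vv -/(small_load j) divr_gt0 // mulr_gt0 // /delta; lra.
have dp : 0 < dd (CQ q) j := lt_le_trans xp (x_le_dd iq).
have np : (0 < nn q j)%N.
  by rewrite -(ltr_nat R); apply: lt_le_trans (nn_ge q j); exact: mulr_gt0.
have r01 : 0 <= x (iu k) j / dd (CQ q) j <= 1.
  by rewrite divr_ge0 ?(ltW dp) //= ler_pdivrMr // mul1r (x_le_dd iq).
apply: (small_gain_bound vp _ L_ge_load L_ge_half) => //.
- by rewrite /Defs.vv -/(small_load j) /delta; field; rewrite !gt_eqF.
- by rewrite x0 x_le1.
- exact: small_slots_prod_miss_ge0.
apply: le_trans (expRN_mul_taylor2_le1 (mulr_ge0 (ltW vp) x0)).
rewrite ler_wpM2r ?(ltW (exp_taylor2_gt0 (mulr_ge0 (ltW vp) x0))) //.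
apply: le_trans (small_slots_prod_miss_le jT iq np) (one_sub_pow_le_expR r01 _).
rewrite mulrA ler_pdivlMr // -mulrA [x _ _ * _]mulrC mulrA ler_wpM2r //.
exact: nn_ge.
Qed.

Lemma node_miss_ge0 k j : 0 <= node_miss k j.
Proof.
apply: sumr_ge0 => a _; rewrite mulr_ge0 ?lab_prob_ge0 //.
by apply: prodr_ge0 => sg _; exact: slot_miss_ge0.
Qed.

Lemma node_miss_le k j : node_miss k j <= 1 - 3 / 16 * x (iu k) j * (j \in T k)%:R.
Proof.
have := node_mass_sub_miss k j; rewrite node_mass_eq1.
set gain_plus := _ * (_ - _); set gain_minus := _ * (_ - _).
set gain_small := _ * (1 - _) => miss_eq.
have [a0 a1 a2] := lab_prob_bounds j.
have plus_ge0 : 0 <= gain_plus by rewrite mulr_ge0 // subr_ge0 slot_miss_le_mass.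
have minus_ge0 : 0 <= gain_minus.
  by rewrite mulr_ge0 // subr_ge0 ler_pM ?slot_miss_ge0 ?slot_miss_le_mass.
have small_ge0 : 0 <= gain_small.
  by rewrite mulr_ge0 // subr_ge0 small_slots_prod_miss_le1.
have gain_ge : j \in T k -> [\/ x (iu k) j = 0, 3 / 16 * x (iu k) j <= gain_plus,
    3 / 16 * x (iu k) j <= gain_minus | 3 / 16 * x (iu k) j <= gain_small].
  move=> jT; have [x0|[ip|[im|[q [iq s_small]]]]] := size_class_cases (iu k) j.
  - by constructor 1.
  - by constructor 2; exact: plus_class_gain.
  - by constructor 3; exact: minus_class_gain.
  - by constructor 4; exact: small_class_gain iq s_small.
clearbody gain_plus gain_minus gain_small.
have [/gain_ge[->|||]|_] := boolP (j \in T k); rewrite ?(mulr0n, mulr1n); lra.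
Qed.

Lemma prod_node_miss_le k :
  \prod_j node_miss k j <= expR (- (3 / 16 * \sum_(j in T k) x (iu k) j)).
Proof.
have miss_le j : node_miss k j <= expR (- (3 / 16 * x (iu k) j * (j \in T k)%:R)).
  apply: le_trans (node_miss_le k j) _.
  by have := expR_ge1Dx (- (3 / 16 * x (iu k) j * (j \in T k)%:R)); lra.
apply: (le_trans (y := \prod_j expR (- (3 / 16 * x (iu k) j * (j \in T k)%:R)))).
  by apply: ler_prod => j _; rewrite node_miss_ge0 miss_le.
rewrite -expR_sum ler_expR sumrN lerN2 big_mkcond mulr_sumr le_eqVlt; apply/orP; left.
by apply/eqP/eq_bigr => j _; case: (j \in T k); rewrite ?mulr1 ?mulr0.
Qed.

Lemma LP_obj_le_Eprime (y : U -> R) : (forall k, 0 <= y k <= 1) ->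
  (forall k, y k <= \sum_(j in T k) x (iu k) j) ->
  (1 - expR (-1)) / 4 * LP_obj w y <= Eprime [ffun => None].
Proof.
move=> y01 y_cov; rewrite Eprime_none /LP_obj mulr_sumr; apply: ler_sum => k _.
rewrite big1 => [|j _]; last exact: node_mass_eq1.
have miss_le : \prod_j node_miss k j <= expR (- (3 / 16 * y k)).
  apply: le_trans (prod_node_miss_le k) _.
  by rewrite ler_expR lerN2 ler_wpM2l ?y_cov //; lra.
rewrite [_ * w k]mulrC mulrCA ler_wpM2l ?(ltW (w_gt0 k)) // mulrC.
by apply: le_trans (linear_le_one_sub_expRN (y01 k)) _; lra.
Qed.

End Rounding.

Theorem theorem13 (R : realType) (S V U : finType)
  (s : S -> R) (c : V -> R) (iu : U -> S) (T : U -> {set V}) (w : U -> R)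
  (x : S -> V -> R) (y : U -> R) :
  (forall i, 0 < s i) -> (forall j, 0 < c j) -> (forall k, 0 < w k) ->
  LP_optimal s c iu T w x y ->
  forall (ord : seq V) (lam : {ffun V -> label}),
    SA2_labelling s c iu T w x ord lam ->
  forall (sord : seq 'I_(size (slots s c x lam)))
         (psi : {ffun 'I_(size (slots s c x lam)) -> S}),
    @SA2_filling R S V U s c iu T w x lam sord psi ->
    (1 - expR (-1)) * Ropt s c iu T w / 4 <= reward iu T w (@Xof R S V s c x lam psi).
Proof.
move=> s_gt0 c_gt0 w_gt0 opt ord lam labelling sord psi filling.
have [[y_ge0 [y_cov [y_le1 [x_cap [x_oversized x01]]]]] _] := opt.
have x_ge0 i j : 0 <= x i j by case/andP: (x01 i j).
have x_le1 i j : x i j <= 1 by case/andP: (x01 i j).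
have y01 k : 0 <= y k <= 1 by rewrite y_ge0 y_le1.
apply: le_trans (Eprime_le_SA2_reward s_gt0 c_gt0 w_gt0 x_ge0 x_cap labelling filling).
apply: le_trans (LP_obj_le_Eprime s_gt0 c_gt0 w_gt0 x_ge0 x_le1 x_cap x_oversized y01 y_cov).
rewrite mulrAC ler_wpM2l ?(Ropt_le_LP_obj s_gt0 w_gt0 opt) //.
have : expR (-1) <= 1 :> R by rewrite expR_le1 lerN10.
by move=> ?; lra.
Qed.
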